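(* Let $k\ge1$ and $X,Y\in\mathrm{Mat}_k(\mathbb{Z}_{\geq 1})$. Then $\mathrm{size}_2(X)+\mathrm{size}_2(Y)\le\mathrm{size}_2(X\otimes Y)+2k^2-1$, where $\otimes$ is max-times matrix multiplication.
   Context: Max-times product: $(X\otimes Y)_{ij}=\max_{1\le l\le k}(x_{il}\cdot y_{lj})$. For an integer $a\ge1$, $\mathrm{size}_2(a)=\lfloor\log_2 a\rfloor+1$. For a $k\times k$ matrix $A$, $\mathrm{size}_2(A)=\sum_{i=1}^k\sum_{j=1}^k\mathrm{size}_2(a_{ij})+k^2-1$. *)

From mathcomp Require Import all_boot all_order all_algebra.
Set Implicit Arguments. Unset Strict Implicit. Unset Printing Implicit Defensive.

(* size_2(a) = floor(log2 a) + 1 for a >= 1; trunc_log 2 a is floor(log2 a). *)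
Definition size2 (a : nat) : nat := trunc_log 2 a + 1.

Definition size2mx (k : nat) (A : 'M[nat]_k) : nat :=
  \sum_(i < k) \sum_(j < k) size2 (A i j) + (k ^ 2 - 1).

Definition maxtimes (k : nat) (X Y : 'M[nat]_k) : 'M[nat]_k :=
  \matrix_(i < k, j < k) \max_(l < k) (X i l * Y l j).

From mathcomp Require Import all_boot all_order all_algebra.
From mathcomp Require Import zify.

Set Implicit Arguments.
Unset Strict Implicit.
Unset Printing Implicit Defensive.

(* Since log2 is superadditive on products, log2 X_il + log2 Y_lj <= log2 (X (x) Y)_ij
   for every l. Summing this with l = i + j (mod k) over all (i, j) pairs each entry
   of X and each entry of Y exactly once, so the entrywise log2-sums satisfy
   L X + L Y <= L (X (x) Y); the additive constants of size_2 account for the rest. *)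

Lemma trunc_log_mul p a b : 1 < p -> 0 < a -> 0 < b ->
  trunc_log p a + trunc_log p b <= trunc_log p (a * b).
Proof.
move=> p_gt1 a_gt0 b_gt0; apply: trunc_log_max => //.
by rewrite expnD leq_mul // trunc_logP.
Qed.

Definition mx_log2 (k : nat) (A : 'M[nat]_k) : nat :=
  \sum_(i < k) \sum_(j < k) trunc_log 2 (A i j).

Lemma size2mxE k (A : 'M[nat]_k) : size2mx A = mx_log2 A + k * k + (k ^ 2 - 1).
Proof.
rewrite /size2mx /size2 /mx_log2; congr (_ + _).
under eq_bigr => i _ do rewrite big_split /= sum_nat_const card_ord muln1.
by rewrite big_split /= sum_nat_const card_ord.
Qed.

Section CyclicReindexing.

Variables (V : finZmodType) (F : V -> V -> nat).

Lemma sum_shift_col : \sum_i \sum_j F i j = \sum_i \sum_j F i (i + j)%R.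
Proof.
apply: eq_bigr => i _.
by rewrite (reindex_inj (h := fun j => (i + j)%R)) //; apply: GRing.addrI.
Qed.

Lemma sum_shift_row : \sum_i \sum_j F i j = \sum_i \sum_j F (i + j)%R j.
Proof.
rewrite exchange_big [RHS]exchange_big /=; apply: eq_bigr => j _.
by rewrite (reindex_inj (h := fun i => (i + j)%R)) //; apply: GRing.addIr.
Qed.

End CyclicReindexing.

Lemma trunc_log2_maxtimes k (X Y : 'M[nat]_k) i l j :
  0 < X i l -> 0 < Y l j ->
  trunc_log 2 (X i l) + trunc_log 2 (Y l j) <= trunc_log 2 (maxtimes X Y i j).
Proof.
move=> Xil_gt0 Ylj_gt0; apply: leq_trans (trunc_log_mul _ Xil_gt0 Ylj_gt0) _ => //.
rewrite mxE; apply: leq_trunc_log.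
exact: (@leq_bigmax _ (fun l => X i l * Y l j)).
Qed.

Lemma mx_log2_maxtimes k (X Y : 'M[nat]_k) :
  (forall i j, 0 < X i j) -> (forall i j, 0 < Y i j) ->
  mx_log2 X + mx_log2 Y <= mx_log2 (maxtimes X Y).
Proof.
case: k X Y => [|k] X Y X_gt0 Y_gt0; first by rewrite /mx_log2 !big_ord0.
rewrite /mx_log2 [S in S + _]sum_shift_col [S in _ + S <= _]sum_shift_row -big_split.
apply: leq_sum => i _; rewrite -big_split; apply: leq_sum => j _.
exact: trunc_log2_maxtimes.
Qed.

Theorem mainTheorem14 (k : nat) (X Y : 'M[nat]_k) :
  1 <= k ->
  (forall i j, 1 <= X i j) -> (forall i j, 1 <= Y i j) ->
  size2mx X + size2mx Y <= size2mx (maxtimes X Y) + 2 * k ^ 2 - 1.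
Proof.
move=> k_gt0 X_gt0 Y_gt0.
have := mx_log2_maxtimes X_gt0 Y_gt0.
rewrite !size2mxE expnS expn1; lia.
Qed.
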